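(* Assume the network $\Sigma$ is well-posed, let $\mathcal{A}\subset X$ be nonempty and closed, and suppose $\Sigma$ is eISS with respect to $\mathcal{A}$ with constants $\rho\in[0,1)$, $C\ge1$ and gain $\gamma\in\mathcal{K}$, i.e. $|x(k,\xi,u)|_{\mathcal{A}}\le\max\{C\rho^k|\xi|_{\mathcal{A}},\gamma(\|u\|_\infty)\}$ for all $\xi\in X$, $u\in\mathcal{U}$, $k\in\mathbb{N}_0$. Then for any function $V:X\to[0,\infty)$ and constants $\underline w,\overline w,b>0$ satisfying $\underline w|\xi|_{\mathcal{A}}^b\le V(\xi)\le\overline w|\xi|_{\mathcal{A}}^b$ for all $\xi\in X$, and for every $\kappa\in(0,1)$, there exists $M\in\mathbb{N}$ such that $V(x(M,\xi,u))\le\max\{\kappa V(\xi),\overline w\,\gamma(\|u\|_\infty)^b\}$ for all $\xi\in X$ and all $u\in\mathcal{U}$. In particular, one can choose any $M\in\mathbb{N}$ satisfying $M\ge\frac1b\log_\rho\big(\frac{\kappa\underline w}{C^b\overline w}\big)$, and $V$ is an exponential $M$-step ISS Lyapunov function for $\Sigma$.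
   Context: Setting: for each $i\in\mathbb{N}$ fix positive integers $n_i,p_i$, norms on $\mathbb{R}^{n_i},\mathbb{R}^{p_i}$, a finite $I_i\subset\mathbb{N}\setminus\{i\}$ with each $\{j: i\in I_j\}$ finite, and continuous $f_i:\mathbb{R}^{n_i}\times\prod_{j\in I_i}\mathbb{R}^{n_j}\times\mathbb{R}^{p_i}\to\mathbb{R}^{n_i}$. $X$ (resp. $U$) is the space of sequences $(x_i)$, $x_i\in\mathbb{R}^{n_i}$ (resp. $(u_i)$, $u_i\in\mathbb{R}^{p_i}$) with finite sup-norm $|\cdot|_\infty$; $f(x,u)_i=f_i(x_i,(x_j)_{j\in I_i},u_i)$; network $\Sigma$: $x(k+1)=f(x(k),u(k))$; well-posed means $f(X\times U)\subset X$. $\mathcal{U}$: sequences $u:\mathbb{N}_0\to U$ with $\|u\|_\infty=\sup_k|u(k)|_\infty<\infty$; $x(k,\xi,u)$ the solution with $x(0)=\xi$. $|x|_{\mathcal{A}}=\inf_{y\in\mathcal{A}}|x-y|_\infty$. An exponential (eISS) $M$-step ISS Lyapunov function is a function $V$ with $\underline w|\xi|_{\mathcal{A}}^b\le V(\xi)\le\overline w|\xi|_{\mathcal{A}}^b$ and $V(x(M,\xi,u))\le\max\{\kappa V(\xi),\tilde\gamma(\|u\|_\infty)\}$ for some $\kappa\in[0,1)$, $\tilde\gamma\in\mathcal{K}$, all $\xi\in X,u\in\mathcal{U}$. $\mathcal{K}$ denotes continuous strictly increasing functions $[0,\infty)\to[0,\infty)$ vanishing at $0$. *)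

From HB Require Import structures.
From mathcomp Require Import all_boot all_order all_algebra.
From mathcomp Require Import all_classical all_reals all_analysis.
Unset Printing Implicit Defensive.
Import Order.TTheory GRing.Theory Num.Theory.
Import numFieldNormedType.Exports.
Local Open Scope classical_set_scope.
Local Open Scope ring_scope.

Section Network.
Variable R : realType.

Definition is_norm (d : nat) (N : 'rV[R]_d -> R) : Prop :=
  [/\ forall v, 0 <= N v,
      forall v, N v = 0 -> v = 0,
      forall a v, N (a *: v) = `|a| * N v
    & forall v w, N (v + w) <= N v + N w].

Definition classK (g : R -> R) : Prop :=
  [/\ g 0 = 0,
      {within [set x : R | 0 <= x], continuous g}
    & forall x y, 0 <= x -> x < y -> g x < g y].

Definition seqT (d : nat -> nat) := forall i : nat, 'rV[R]_(d i).

Definition supnorm {d : nat -> nat} (N : forall i, 'rV[R]_(d i) -> R)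
  (x : seqT d) : R := sup [set N i (x i) | i in [set: nat]].

(* finiteness of the sup-norm: membership in X (resp. U) *)
Definition bounded_seq {d : nat -> nat} (N : forall i, 'rV[R]_(d i) -> R)
  (x : seqT d) : Prop := exists B, forall i, N i (x i) <= B.

Definition seq_diff {d : nat -> nat} (x y : seqT d) : seqT d :=
  fun i => x i - y i.

Variables (n p : nat -> nat).
Variables (nx : forall i, 'rV[R]_(n i) -> R) (nu : forall i, 'rV[R]_(p i) -> R).

Definition inX (x : seqT n) := bounded_seq nx x.
Definition inU (u : seqT p) := bounded_seq nu u.

Definition interconnection (I : nat -> seq nat) : Prop :=
  (forall i, i \notin I i) /\
  (forall i, exists N : nat, forall j, i \in I j -> (j < N)%N).

(* f_i is given as F i xi y ui, where only the coordinates y j, j \in I i, of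
   y matter (locality), i.e. F i is a function on
   R^{n_i} x prod_{j in I_i} R^{n_j} x R^{p_i}; continuity on this finite
   product is written out in epsilon-delta form w.r.t. the given norms. *)
Definition local_continuous (I : nat -> seq nat)
  (F : forall i, 'rV[R]_(n i) -> seqT n -> 'rV[R]_(p i) -> 'rV[R]_(n i)) : Prop :=
  forall i,
  (forall xi y y' ui, (forall j, j \in I i -> y j = y' j) ->
     F i xi y ui = F i xi y' ui) /\
  (forall xi y ui eps, 0 < eps -> exists2 del, 0 < del &
     forall xi' y' ui', nx i (xi' - xi) < del ->
       (forall j, j \in I i -> nx j (y' j - y j) < del) ->
       nu i (ui' - ui) < del ->
       nx i (F i xi' y' ui' - F i xi y ui) < eps).

Variable F : forall i, 'rV[R]_(n i) -> seqT n -> 'rV[R]_(p i) -> 'rV[R]_(n i).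

Definition fnet (x : seqT n) (u : seqT p) : seqT n := fun i => F i (x i) x (u i).

Definition well_posed : Prop :=
  forall x u, inX x -> inU u -> inX (fnet x u).

Definition inUU (u : nat -> seqT p) : Prop :=
  (forall k, inU (u k)) /\ exists B, forall k, supnorm nu (u k) <= B.

Definition normUU (u : nat -> seqT p) : R :=
  sup [set supnorm nu (u k) | k in [set: nat]].

Fixpoint traj (xi : seqT n) (u : nat -> seqT p) (k : nat) : seqT n :=
  match k with
  | O => xi
  | k'.+1 => fnet (traj xi u k') (u k')
  end.

Definition distA (A : set (seqT n)) (x : seqT n) : R :=
  inf [set supnorm nx (seq_diff x y) | y in A].

Definition closed_in_X (A : set (seqT n)) : Prop :=
  (forall x, A x -> inX x) /\
  (forall x, inX x ->
     (forall e, 0 < e -> exists2 y, A y & supnorm nx (seq_diff x y) < e) -> A x).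

Definition eISS (A : set (seqT n)) (C rho : R) (gamma : R -> R) : Prop :=
  [/\ 0 <= rho < 1, 1 <= C, classK gamma &
      forall xi u k, inX xi -> inUU u ->
        distA A (traj xi u k) <= Num.max (C * rho ^+ k * distA A xi) (gamma (normUU u))].

Definition eISS_Lyapunov (A : set (seqT n)) (M : nat) (V : seqT n -> R) : Prop :=
  exists wl wu b : R, [/\ 0 < wl, 0 < wu, 0 < b,
    (forall xi, inX xi ->
       wl * (distA A xi) `^ b <= V xi /\ V xi <= wu * (distA A xi) `^ b) &
    exists kappa (gt : R -> R), [/\ 0 <= kappa < 1, classK gt &
      forall xi u, inX xi -> inUU u ->
        V (traj xi u M) <= Num.max (kappa * V xi) (gt (normUU u))]].

End Network.

Arguments is_norm {R d}.
Arguments classK {R}.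
Arguments local_continuous {R n p}.
Arguments well_posed {R n p}.
Arguments closed_in_X {R n}.
Arguments eISS {R n p}.
Arguments inX {R n}.
Arguments inU {R p}.
Arguments distA {R n}.
Arguments inUU {R p}.
Arguments traj {R n p}.
Arguments fnet {R n p}.
Arguments normUU {R p}.
Arguments eISS_Lyapunov {R n p}.

From HB Require Import structures.
From mathcomp Require Import all_boot all_order all_algebra.
From mathcomp Require Import all_classical all_reals all_analysis.
Import Order.TTheory GRing.Theory Num.Theory.
Import numFieldNormedType.Exports.
Local Open Scope classical_set_scope.
Local Open Scope ring_scope.

(* Along a trajectory, eISS gives |x(M)|_A <= max (C rho^M |xi|_A, gamma |u|).
   Raising this to the power b and using the sandwich bounds on V yields
   V (x(M)) <= max (wu (C rho^M)^b |xi|_A^b, wu gamma^b), and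
   wu (C rho^M)^b |xi|_A^b <= kappa wl |xi|_A^b <= kappa V(xi) as soon as
   (rho^M)^b <= kappa wl / (C^b wu); taking logarithms (ln rho < 0 flips the
   inequality) this is the lower bound on M.  The new gain wu gamma^b is again
   of class K, so V is an M-step eISS Lyapunov function. *)

(* [powR] sends negative numbers to 1, so it is discontinuous at 0; clamping
   the argument at 0 gives a continuous function agreeing with it on [0, +oo). *)
Lemma continuous_powR_maxr0 (R : realType) (b : R) : 0 < b ->
  continuous (fun y : R => (Num.max y 0) `^ b).
Proof.
move=> b_gt0 t; have [t_lt0|t_gt0|->] := ltgtP t 0.
- apply: (@near_cst_continuous _ _ 0); near=> y.
  by rewrite (max_idPr (ltW _)) ?powR0 ?gt_eqF //; near: y; exact: lt_nbhsl.
- have powRb_cts : {for t, continuous (@powR R ^~ b)}.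
    apply/differentiable_continuous/derivable1_diffP.
    by apply: derivable_powR; rewrite in_itv /= andbT.
  apply: (@cvg_trans _ ((@powR R ^~ b) @ t)).
    apply: near_eq_cvg; near=> y.
    by rewrite /= (max_idPl (ltW _)) //; near: y; exact: lt_nbhsr.
  by rewrite /= (max_idPl (ltW t_gt0)); exact: powRb_cts.
- apply/left_right_continuousP; split.
    rewrite /= maxxx powR0 ?gt_eqF //; apply: cvg_near_cst; near=> y.
    by rewrite (max_idPr (ltW _)) ?powR0 ?gt_eqF //; near: y; exact: nbhs_left_lt.
  rewrite /= maxxx powR0 ?gt_eqF //; apply: cvg_trans (powR_cvg0 b_gt0).
  apply: near_eq_cvg; near=> y.
  by rewrite /= (max_idPl (ltW _)) //; near: y; exact: nbhs_right_gt.
Unshelve. all: end_near.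
Qed.

Lemma classK_ge0 {R : realType} {g : R -> R} {x : R} :
  classK g -> 0 <= x -> 0 <= g x.
Proof.
case=> g0 _ g_incr; rewrite le_eqVlt => /predU1P[<-|x_gt0]; first by rewrite g0.
by rewrite -g0 ltW // g_incr.
Qed.

Lemma classK_scale_powR (R : realType) (g : R -> R) (w b : R) :
  classK g -> 0 < w -> 0 < b -> classK (fun s => w * g s `^ b).
Proof.
move=> gK w_gt0 b_gt0; have [g0 g_cts g_incr] := gK.
split.
- by rewrite g0 powR0 ?gt_eqF // mulr0.
- apply: (@subspace_eq_continuous _ _ _
    ((fun y => w * (Num.max y 0) `^ b) \o from_subspace [set x : R | 0 <= x] g)).
    by move=> x; rewrite inE => x_ge0 /=; rewrite (max_idPl (classK_ge0 gK x_ge0)).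
  move=> x; apply: continuous_comp; first exact: g_cts.
  exact/continuousM/continuous_powR_maxr0/b_gt0/cst_continuous.
- move=> x y x_ge0 xy; rewrite ltr_pM2l // gt0_ltr_powR // ?nnegrE ?g_incr //.
    exact: classK_ge0.
  by apply: classK_ge0 => //; apply: le_trans (ltW xy).
Qed.

Lemma exprn_powR_le {R : realType} {rho q b : R} {M : nat} :
  0 <= rho < 1 -> 0 < q -> 0 < b -> (0 < M)%N ->
  b^-1 * (ln q / ln rho) <= M%:R -> (rho ^+ M) `^ b <= q.
Proof.
move=> /andP[rho_ge0 rho_lt1] q_gt0 b_gt0 M_gt0 hM.
(* For [rho = 0] the bound on [M] is vacuous, since [ln 0 = 0]. *)
have [->|rho_neq0] := eqVneq rho 0.
  by rewrite expr0n eqn0Ngt M_gt0 powR0 ?gt_eqF // ltW.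
have rho_gt0 : 0 < rho by rewrite lt_neqAle eq_sym rho_neq0.
have ln_rho_lt0 : ln rho < 0 by rewrite ln_lt0 // rho_gt0.
have rhoMb_gt0 : 0 < (rho ^+ M) `^ b by rewrite powR_gt0 // exprn_gt0.
rewrite -ler_ln ?posrE // ln_powR lnXn // mulrnAr -mulr_natl mulrA.
rewrite -ler_ndivrMr //.
by rewrite mulrC ler_pdivrMr in hM.
Qed.

Lemma sandwich_powR_le_max {R : realType} {wl wu b c kappa d0 dM v0 vM g : R} :
  0 <= b -> 0 < wu -> 0 <= c -> 0 <= kappa -> 0 <= d0 -> 0 <= dM ->
  wu * c `^ b <= kappa * wl ->
  wl * d0 `^ b <= v0 -> vM <= wu * dM `^ b -> dM <= Num.max (c * d0) g ->
  vM <= Num.max (kappa * v0) (wu * g `^ b).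
Proof.
move=> b_ge0 wu_gt0 c_ge0 kappa_ge0 d0_ge0 dM_ge0 hc hv0 hvM.
have powRb_le x y : 0 <= x -> x <= y -> wu * x `^ b <= wu * y `^ b.
  move=> x_ge0 xy; rewrite ler_pM2l // ge0_ler_powR // nnegrE.
  exact: le_trans xy.
rewrite !le_max => /orP[dM_le|dM_le]; apply/orP; [left|right].
- apply: (le_trans hvM); apply: (le_trans (powRb_le _ _ dM_ge0 dM_le)).
  rewrite powRM // mulrA; apply: le_trans (ler_wpM2r (powR_ge0 _ _) hc) _.
  by rewrite -mulrA ler_wpM2l.
- exact: le_trans hvM (powRb_le _ _ dM_ge0 dM_le).
Qed.

Lemma sup_ge0 (R : realType) (S : set R) : (forall s, S s -> 0 <= s) -> 0 <= sup S.
Proof.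
move=> S_ge0; have [[[s Ss] S_ub]|S_nosup] := pselect (has_sup S).
  by apply: le_trans (S_ge0 _ Ss) _; exact: ub_le_sup.
by rewrite sup_out.
Qed.

Section NetworkLyapunov.
Context {R : realType} {n p : nat -> nat}.
Context {nx : forall i, 'rV[R]_(n i) -> R} {nu : forall i, 'rV[R]_(p i) -> R}.
Context {F : forall i, 'rV[R]_(n i) -> seqT R n -> 'rV[R]_(p i) -> 'rV[R]_(n i)}.
Context {A : set (seqT R n)} {C rho : R} {gamma : R -> R}.
Context {V : seqT R n -> R} {wl wu b kappa : R}.

Hypothesis nx_ge0 : forall i v, 0 <= nx i v.
Hypothesis A_neq0 : A !=set0.
Hypothesis wpF : well_posed nx nu F.
Hypothesis issA : eISS nx nu F A C rho gamma.
Hypotheses (wl_gt0 : 0 < wl) (wu_gt0 : 0 < wu).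
Hypotheses (b_gt0 : 0 < b) (kappa_gt0 : 0 < kappa).
Hypothesis V_sandwich : forall xi, inX nx xi ->
  wl * (distA nx A xi) `^ b <= V xi /\ V xi <= wu * (distA nx A xi) `^ b.

Lemma distA_ge0 x : 0 <= distA nx A x.
Proof.
apply: lb_le_inf; first by case: A_neq0 => y Ay; eexists; exists y.
by move=> _ [y _ <-]; apply: sup_ge0 => _ [i _ <-].
Qed.

Lemma traj_inX xi u k : inX nx xi -> inUU nu u -> inX nx (traj F xi u k).
Proof. by move=> xiX [uU _]; elim: k => //= k IHk; exact: wpF. Qed.

Lemma eISS_contraction_le M : (0 < M)%N ->
  b^-1 * (ln (kappa * wl / (C `^ b * wu)) / ln rho) <= M%:R ->
  wu * (C * rho ^+ M) `^ b <= kappa * wl.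
Proof.
case: issA => rho_bnd C_ge1 _ _ M_gt0 hM.
have C_gt0 : 0 < C by exact: lt_le_trans C_ge1.
have CbW_gt0 : 0 < C `^ b * wu by rewrite mulr_gt0 // powR_gt0.
have q_gt0 := divr_gt0 (mulr_gt0 kappa_gt0 wl_gt0) CbW_gt0.
have := exprn_powR_le rho_bnd q_gt0 b_gt0 M_gt0 hM.
rewrite ler_pdivlMr // powRM ?(ltW C_gt0) ?exprn_ge0 //; last by case/andP: rho_bnd.
suff -> : wu * (C `^ b * (rho ^+ M) `^ b) = (rho ^+ M) `^ b * (C `^ b * wu) by [].
by rewrite mulrC [C `^ b * _]mulrC mulrA.
Qed.

Lemma eISS_Lyapunov_decrease M : (0 < M)%N ->
  b^-1 * (ln (kappa * wl / (C `^ b * wu)) / ln rho) <= M%:R ->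
  forall xi u, inX nx xi -> inUU nu u ->
    V (traj F xi u M) <= Num.max (kappa * V xi) (wu * (gamma (normUU nu u)) `^ b).
Proof.
move=> M_gt0 hM xi u xiX uU; have [/andP[rho_ge0 _] C_ge1 _ traj_bnd] := issA.
apply: (sandwich_powR_le_max _ _ _ _ _ _ (eISS_contraction_le _ M_gt0 hM)
  (V_sandwich _ xiX).1 (V_sandwich _ (traj_inX xi u M xiX uU)).2
  (traj_bnd _ _ M xiX uU)).
all: rewrite ?distA_ge0 ?(ltW b_gt0) ?(ltW kappa_gt0) //.
by rewrite mulr_ge0 ?exprn_ge0 // (le_trans ler01 C_ge1).
Qed.

End NetworkLyapunov.

Theorem proposition3 (R : realType) (n p : nat -> nat)
  (nx : forall i, 'rV[R]_(n i) -> R) (nu : forall i, 'rV[R]_(p i) -> R)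
  (I : nat -> seq nat)
  (F : forall i, 'rV[R]_(n i) -> seqT R n -> 'rV[R]_(p i) -> 'rV[R]_(n i))
  (A : set (seqT R n)) (C rho : R) (gamma : R -> R)
  (V : seqT R n -> R) (wl wu b kappa : R) :
  (forall i, (0 < n i)%N) -> (forall i, (0 < p i)%N) ->
  (forall i, is_norm (nx i)) -> (forall i, is_norm (nu i)) ->
  interconnection I -> local_continuous nx nu I F ->
  well_posed nx nu F ->
  A !=set0 -> closed_in_X nx A ->
  eISS nx nu F A C rho gamma ->
  (forall xi, inX nx xi -> 0 <= V xi) ->
  0 < wl -> 0 < wu -> 0 < b ->
  (forall xi, inX nx xi ->
     wl * (distA nx A xi) `^ b <= V xi /\ V xi <= wu * (distA nx A xi) `^ b) ->
  0 < kappa < 1 ->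
  (exists M : nat, (0 < M)%N /\
     forall xi u, inX nx xi -> inUU nu u ->
       V (traj F xi u M) <= Num.max (kappa * V xi) (wu * (gamma (normUU nu u)) `^ b))
  /\
  (forall M : nat, (0 < M)%N ->
     b^-1 * (ln (kappa * wl / (C `^ b * wu)) / ln rho) <= M%:R ->
     (forall xi u, inX nx xi -> inUU nu u ->
        V (traj F xi u M) <= Num.max (kappa * V xi) (wu * (gamma (normUU nu u)) `^ b))
     /\ eISS_Lyapunov nx nu F A M V).
Proof.
move=> _ _ nx_norm _ _ _ wpF A_neq0 _ issA _ wl_gt0 wu_gt0 b_gt0 V_sandwich
  /andP[kappa_gt0 kappa_lt1].
have nx_ge0 i v : 0 <= nx i v by case: (nx_norm i).
have decrease := eISS_Lyapunov_decrease nx_ge0 A_neq0 wpF issA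
  wl_gt0 wu_gt0 b_gt0 kappa_gt0 V_sandwich.
split.
  set M0 := b^-1 * (ln (kappa * wl / (C `^ b * wu)) / ln rho).
  exists (Num.truncn M0).+1; split => //.
  by apply: decrease => //; exact/ltW/truncnS_gt.
move=> M M_gt0 hM; split; first exact: decrease.
have [_ _ gammaK _] := issA.
exists wl, wu, b; split => //.
exists kappa, (fun s => wu * gamma s `^ b); split.
- by rewrite ltW ?kappa_gt0.
- exact: classK_scale_powR.
- exact: decrease.
Qed.
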